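(* Let $h,v$ be permutations of $\Lambda=\{1,\dots,d\}$ such that $\langle h,v\rangle$ acts transitively on $\Lambda$, let $M\ge0$ be an integer, and let $(\sigma_n)_{n\in\mathbb{Z}}$ be a Sturmian sequence in $\Sigma=\{L,R\}$. Then every sequence $(\mu_n,\sigma_n)_{n\in\mathbb{Z}}\in(\Lambda\times\Sigma)^{\mathbb{Z}}$ satisfying $\mu_{n+1}=\sigma_n\cdot\mu_n$ for all $n$ contains every element of $\Lambda\times\Sigma$.
   Context: Here $L\cdot\lambda=vh^M(\lambda)$ and $R\cdot\lambda=vh^{M+1}(\lambda)$. A Sturmian sequence is a biinfinite sequence over two letters that is not eventually periodic and has exactly $n+1$ distinct subwords of each length $n$. *)

From mathcomp Require Import all_boot all_order all_algebra all_fingroup.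
Set Implicit Arguments. Unset Strict Implicit. Unset Printing Implicit Defensive.
Import GRing.Theory Num.Theory.

Notation SigL := false.
Notation SigR := true.

(* Lambda = {1,...,d} is encoded as 'I_d. *)
Definition sact (d : nat) (h v : {perm 'I_d}) (M : nat) (s : bool) (x : 'I_d) : 'I_d :=
  if s then v ((h ^+ M.+1)%g x) else v ((h ^+ M)%g x).

Definition is_factor (s : int -> bool) (w : seq bool) : Prop :=
  exists k : int, forall i : nat, (i < size w)%N -> nth false w i = s (k + i%:Z)%R.

Definition num_factors_eq (s : int -> bool) (n c : nat) : Prop :=
  exists ws : seq (seq bool),
    [/\ uniq ws, size ws = c, all (fun w => size w == n) ws &
        forall w, size w = n -> (is_factor s w <-> w \in ws)].

Definition eventually_periodic (s : int -> bool) : Prop :=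
  exists (p : nat) (N : int), (0 < p)%N /\
    ((forall n : int, (N <= n)%R -> s (n + p%:Z)%R = s n) \/
     (forall n : int, (n <= N)%R -> s (n - p%:Z)%R = s n)).

Definition sturmian (s : int -> bool) : Prop :=
  ~ eventually_periodic s /\ forall n : nat, num_factors_eq s n n.+1.

From mathcomp Require Import all_boot all_order all_algebra all_fingroup.
From mathcomp Require Import zify boolp.
Set Implicit Arguments. Unset Strict Implicit. Unset Printing Implicit Defensive.
Import GRing.Theory.

(* The factor language of a Sturmian sequence is factorial, extendable on both
   sides and recurrent, and has exactly one right special factor of each length;
   in particular some letter ~c never occurs twice in a row.  These properties
   survive desubstitution along c -> c, ~c -> c ~c, and an induction along
   desubstitution shows that the return words of every factor w generate: a
   subgroup containing the images of all return words of w under a map from the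
   letters to a group contains the images of both letters.
   Let V(w) be the set of states mu_k at the occurrences k of a factor w, and
   choose w with #V(w) minimal.  For a return word x of w, V(x w) is contained in
   V(w), hence equal to it by minimality, and the permutation read along x maps
   it into V(w).  So the permutations of both letters, and with them h and v,
   stabilize V(w); by transitivity V(w) is all of Lambda, and by minimality again
   so is V([s]) for each letter s. *)

Implicit Types (F : seq bool -> Prop) (u v w x y z : seq bool) (a b c : bool).

(** * Sturmian languages *)

Definition right_special F u := F (rcons u false) /\ F (rcons u true).

Definition return_word F w x := [/\ x != [::], F (x ++ w) & exists t, x ++ w = w ++ t].

Record sturmian_lang F : Prop := SturmianLang {
  lang_catP : forall u v, F (u ++ v) -> F u /\ F v;
  lang_extr : forall u, F u -> exists a, F (rcons u a);
  lang_extl : forall u, F u -> exists a, F (a :: u);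
  right_special_uniq : forall u v,
    right_special F u -> right_special F v -> size u = size v -> u = v;
  right_special_exists : forall n, exists2 u, size u = n & right_special F u;
  lang_recurrent : forall u, F u -> exists x, return_word F u x }.

Lemma eqNb c : ((~~ c) == c) = false. Proof. by case: c. Qed.

Lemma eqbN c : (c == ~~ c) = false. Proof. by case: c. Qed.

Lemma neq_negb a c : a != c -> a = ~~ c. Proof. by case: a c => [] []. Qed.

Section Languages.
Variable F : seq bool -> Prop.
Hypothesis hF : sturmian_lang F.

Lemma lang_prefix u v : F (u ++ v) -> F u. Proof. by move/(lang_catP hF) => []. Qed.

Lemma lang_suffix u v : F (u ++ v) -> F v. Proof. by move/(lang_catP hF) => []. Qed.

Lemma lang_behead a u : F (a :: u) -> F u. Proof. exact: (@lang_suffix [:: a]). Qed.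

Lemma lang_belast a u : F (rcons u a) -> F u.
Proof. by rewrite -cats1; apply: lang_prefix. Qed.

Lemma right_specialE c u : right_special F u <-> F (rcons u c) /\ F (rcons u (~~ c)).
Proof. by case: c; rewrite /right_special; tauto. Qed.

Lemma lang_letter a : F [:: a].
Proof. by have [u /size0nil -> [F0 F1]] := right_special_exists hF 0; case: a. Qed.

Lemma right_special_drop k u : right_special F u -> right_special F (drop k u).
Proof.
rewrite /right_special -{1 2}(cat_take_drop k u) !rcons_cat.
by case=> /lang_suffix F0 /lang_suffix F1.
Qed.

Lemma right_special_suffix u v : right_special F u -> right_special F v ->
  size u <= size v -> exists p, v = p ++ u.
Proof.
move=> RSu RSv le_uv; exists (take (size v - size u) v).
rewrite {2}(right_special_uniq hF RSu (right_special_drop (size v - size u) RSv)).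
  by rewrite cat_take_drop.
by rewrite size_drop; lia.
Qed.

Lemma isolated_of_right_special c : right_special F [:: c] -> ~ F [:: ~~ c; ~~ c].
Proof.
move=> RSc Fnn; have [_ Fcn] := (right_specialE c _).1 RSc.
have [Fnc | Fnc] := pselect (F [:: ~~ c; c]).
  have RSn : right_special F [:: ~~ c] by apply/(right_specialE c).
  by have [/eqP] := right_special_uniq hF RSn RSc erefl; rewrite eqNb.
have onlyn z : F (~~ c :: z) -> c \notin z.
  elim: z => [//|b z IHz] Fz.
  have eb : b = ~~ c.
    apply: neq_negb; apply: contra_notN Fnc => /eqP eb.
    by move: Fz; rewrite eb -[_ :: _ :: z]/([:: ~~ c; c] ++ z) => /lang_prefix.
  rewrite inE negb_or IHz; last by move: Fz; rewrite eb => /lang_behead.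
  by rewrite eb eqbN.
have [x [xn Fx [t Et]]] := lang_recurrent hF Fcn.
case: x xn Fx Et => [//|a x] _ Fx [_ Et].
have Ft : F (~~ c :: t) by rewrite -Et; apply: lang_behead Fx.
case: x Et {Fx} => [[/eqP]|b x [_ Et]]; first by rewrite eqbN.
by have := onlyn _ Ft; rewrite -Et mem_cat inE eqxx orbT.
Qed.

Section IsolatedLetter.
Variable c : bool.
Hypothesis nc : ~ F [:: ~~ c; ~~ c].

Lemma isolated_followed u : F (rcons u (~~ c)) -> F (rcons (rcons u (~~ c)) c).
Proof.
move=> Fu; have [a Fua] := lang_extr hF Fu.
case: (eqVneq a c) Fua => [-> //|/neq_negb -> Fua].
by case: nc; move: Fua; rewrite -!cats1 -catA; apply: lang_suffix.
Qed.

Lemma isolated_preceded u : F (~~ c :: u) -> F (c :: ~~ c :: u).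
Proof.
move=> Fu; have [a Fau] := lang_extl hF Fu.
case: (eqVneq a c) Fau => [-> //|/neq_negb -> Fau].
by case: nc; move: Fau; rewrite -[_ :: _ :: u]/([:: ~~ c; ~~ c] ++ u); apply: lang_prefix.
Qed.

Lemma right_special_isolated : right_special F [:: c].
Proof.
have [[|a [|//]] // _ RSa] := right_special_exists hF 1.
case: (eqVneq a c) RSa => [-> //|/neq_negb -> RSa].
by case: nc; move: RSa => /(right_specialE (~~ c)) [].
Qed.

End IsolatedLetter.
End Languages.

Lemma sturmian_lang_isolated F : sturmian_lang F -> exists c, ~ F [:: ~~ c; ~~ c].
Proof.
move=> hF; have [[|c [|//]] // _ RSc] := right_special_exists hF 1.
by exists c; apply: isolated_of_right_special.
Qed.

(** * Desubstitution *)

Fixpoint sturm_subst c u :=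
  if u is a :: r then
    (if a == c then [:: c] else [:: c; ~~ c]) ++ sturm_subst c r
  else [::].

(* Decodes the blocks [c] and [c; ~~ c] of a word starting with [c], see [unsubst_subst]. *)
Fixpoint sturm_unsubst c z :=
  if z is a :: r then
    if a == c then
      if r is b :: r' then
        if b == c then c :: sturm_unsubst c r else ~~ c :: sturm_unsubst c r'
      else [:: c]
    else sturm_unsubst c r
  else [::].

Lemma prefix_cat_leq (T : eqType) (p q u t : seq T) :
  p ++ q = u ++ t -> size u <= size p -> exists t', p = u ++ t'.
Proof.
move=> Epq le_up; apply/prefixP; rewrite prefixE -(takel_cat q le_up) Epq.
by rewrite take_size_cat.
Qed.

Section Substitution.
Variable c : bool.
Local Notation tau := (sturm_subst c).
Local Notation untau := (sturm_unsubst c).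

Lemma subst_cat u v : tau (u ++ v) = tau u ++ tau v.
Proof. by elim: u => //= a u ->; rewrite catA. Qed.

Lemma subst_c : tau [:: c] = [:: c]. Proof. by rewrite /= eqxx. Qed.

Lemma subst_negc : tau [:: ~~ c] = [:: c; ~~ c]. Proof. by case: c. Qed.

Lemma subst_cons_c u : tau (c :: u) = c :: tau u.
Proof. by rewrite /= eqxx. Qed.

Lemma subst_cons_negc u : tau (~~ c :: u) = c :: ~~ c :: tau u.
Proof. by case: c. Qed.

Lemma unsubst_cc t : untau (c :: c :: t) = c :: untau (c :: t).
Proof. by rewrite /= eqxx. Qed.

Lemma unsubst_cnegc t : untau (c :: ~~ c :: t) = ~~ c :: untau t.
Proof. by case: c. Qed.

Lemma subst_nseq k : tau (nseq k c) = nseq k c.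
Proof. by elim: k => //= k ->; rewrite eqxx. Qed.

Lemma subst_eq_nil u : tau u = [::] -> u = [::].
Proof. by case: u => //= a u; case: (a == c). Qed.

Lemma subst_cat_c u r : exists t, tau u ++ c :: r = c :: t.
Proof. by case: u => [|a u] /=; [|case: (a == c)]; eexists. Qed.

Lemma size_subst u : size (tau u) = size u + count_mem (~~ c) u.
Proof.
elim: u => //= a u IHu; rewrite size_cat IHu.
by case: (eqVneq a c) => [->|/neq_negb ->]; rewrite ?eqxx ?eqNb ?eqbN /=; lia.
Qed.

Lemma count_subst u : count_mem (~~ c) (tau u) = count_mem (~~ c) u.
Proof.
elim: u => //= a u IHu; rewrite count_cat IHu.
by case: (eqVneq a c) => [->|/neq_negb ->]; rewrite ?eqxx ?eqNb ?eqbN /=; lia.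
Qed.

Lemma unsubst_subst u r : untau (tau u ++ c :: r) = u ++ untau (c :: r).
Proof.
elim: u => [//|a u IHu].
case: (eqVneq a c) => [->|/neq_negb ->].
  have [t Et] := subst_cat_c u r.
  by rewrite subst_cons_c cat_cons Et unsubst_cc -Et IHu.
by rewrite subst_cons_negc !cat_cons unsubst_cnegc IHu.
Qed.

Lemma subst_inj : injective tau.
Proof.
move=> u v Euv.
have Ec : untau [:: c] = [:: c] by rewrite /= eqxx.
by apply: (@rcons_injl _ c); rewrite -!cats1 -Ec -!unsubst_subst Euv.
Qed.

Lemma subst_neq_negc u t : tau u <> ~~ c :: t.
Proof.
case: u => [//|a u]; case: (eqVneq a c) => [->|/neq_negb ->];
  by rewrite ?subst_cons_c ?subst_cons_negc => -[/eqP]; rewrite eqbN.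
Qed.

Lemma subst_suffix p u v : p ++ tau u = tau v -> exists q, v = q ++ u.
Proof.
elim: v p => [|b v IHv] [|p0 p].
- by move/subst_eq_nil ->; exists [::].
- by [].
- by move=> Euv; exists [::]; apply: subst_inj.
case: (eqVneq b c) => [->|/neq_negb ->].
  by rewrite subst_cons_c => -[_ /IHv [q ->]]; exists (c :: q).
rewrite subst_cons_negc; case: p => [|p1 p] [_].
  by move/subst_neq_negc.
by move=> _ /IHv [q ->]; exists (~~ c :: q).
Qed.

End Substitution.

(* The trailing [c] records that the image of [u] is followed by a new block. *)
Definition desubst_lang c F u := F (sturm_subst c u ++ [:: c]).

Section Desubstitution.
Variable F : seq bool -> Prop.
Hypothesis hF : sturmian_lang F.
Variable c : bool.
Hypothesis nc : ~ F [:: ~~ c; ~~ c].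
Local Notation tau := (sturm_subst c).
Local Notation F' := (desubst_lang c F).

Lemma lang_subst_image z : F (c :: z) -> exists u, c :: z = tau u.
Proof.
elim: {z} (size z) {-2}z (leqnn (size z)) => [|n IHn] [|b z] // => [_ _|_ _|].
- by exists [:: c]; rewrite subst_c.
- by exists [:: c]; rewrite subst_c.
move=> le_zn; case: (eqVneq b c) => [->|/neq_negb ->] Fz.
  have [u Eu] := IHn z le_zn (lang_behead hF Fz).
  by exists (c :: u); rewrite subst_cons_c -Eu.
case: z le_zn Fz => [|b' z] le_zn Fz; first by exists [:: ~~ c]; rewrite subst_negc.
case: (eqVneq b' c) Fz => [->|/neq_negb ->] Fz; last first.
  case: nc; move/(lang_behead hF): Fz.
  by rewrite -[_ :: _ :: z]/([:: ~~ c; ~~ c] ++ z) => /(lang_prefix hF).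
have [u Eu] := IHn z (ltnW le_zn) (lang_behead hF (lang_behead hF Fz)).
by exists (~~ c :: u); rewrite subst_cons_negc -Eu.
Qed.

Lemma subst_rcons_c u : tau (rcons u c) ++ [:: c] = tau u ++ [:: c; c].
Proof. by rewrite -cats1 subst_cat subst_c -catA. Qed.

Lemma subst_rcons_negc u : tau (rcons u (~~ c)) ++ [:: c] = tau u ++ [:: c; ~~ c; c].
Proof. by rewrite -cats1 subst_cat subst_negc -catA. Qed.

Lemma right_special_desubst u : right_special F' u <-> right_special F (tau u ++ [:: c]).
Proof.
rewrite (right_specialE _ c) (right_specialE F c) /desubst_lang.
rewrite subst_rcons_c subst_rcons_negc -!cats1 -!catA /=.
split=> -[Fcc Fcn]; split => //.
  by apply: (lang_prefix hF (v := [:: c])); rewrite -catA.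
by move: (isolated_followed hF nc (u := tau u ++ [:: c])); rewrite -!cats1 -!catA; apply.
Qed.

Lemma desubst_catP u v : F' (u ++ v) -> F' u /\ F' v.
Proof.
rewrite /desubst_lang subst_cat -catA => Fuv; split; last exact: (lang_suffix hF Fuv).
have [t Et] := subst_cat_c c v [::]; rewrite Et in Fuv.
by apply: (lang_prefix hF (v := t)); rewrite -catA.
Qed.

Lemma desubst_extr u : F' u -> exists a, F' (rcons u a).
Proof.
move=> Fu; have [a Fua] := lang_extr hF Fu; rewrite /desubst_lang.
case: (eqVneq a c) Fua => [->|/neq_negb ->] Fua.
  by exists c; rewrite subst_rcons_c; move: Fua; rewrite -cats1 -catA.
exists (~~ c); rewrite subst_rcons_negc.
by move: (isolated_followed hF nc Fua); rewrite -!cats1 -!catA.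
Qed.

Lemma desubst_extl u : F' u -> exists a, F' (a :: u).
Proof.
move=> Fu; have [a Fau] := lang_extl hF Fu; rewrite /desubst_lang.
case: (eqVneq a c) Fau => [->|/neq_negb ->] Fau.
  by exists c; rewrite subst_cons_c.
by exists (~~ c); rewrite subst_cons_negc; apply: isolated_preceded.
Qed.

Lemma desubst_right_special_uniq u v :
  right_special F' u -> right_special F' v -> size u = size v -> u = v.
Proof.
wlog le_uv : u v / size (tau u) <= size (tau v).
  move=> W RSu RSv suv; case/orP: (leq_total (size (tau u)) (size (tau v))) => le.
    exact: W.
  exact/esym/W.
move=> /right_special_desubst RSu /right_special_desubst RSv suv.
have [p Ep] := right_special_suffix hF RSu RSv (ltac:(rewrite !size_cat leq_add2r //)).
have [q Eq] : exists q, v = q ++ u.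
  by apply: (@subst_suffix c p); apply: (@rcons_injl _ c); rewrite -!cats1 -catA Ep.
have /size0nil q0 : size q = 0 by move: suv; rewrite Eq size_cat; lia.
by rewrite Eq q0.
Qed.

Lemma desubst_right_special_exists n : exists2 u, size u = n & right_special F' u.
Proof.
suff [u su RSu] : exists2 u, size u = n & right_special F (tau u ++ [:: c]).
  by exists u => //; apply/right_special_desubst.
elim: n => [|n [u su RSu]]; first by exists [::]; last exact: right_special_isolated.
have [z sz RSz] := right_special_exists hF (size (tau u ++ [:: c])).+2.
have [p Ez] := right_special_suffix hF RSu RSz (ltac:(rewrite sz; lia)).
have : size p = 2 by move: sz; rewrite Ez size_cat; lia.
case: p Ez => [|a [|b [|//]]] // Ez _.
case: (eqVneq b c) Ez => [->|/neq_negb ->] Ez.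
  exists (c :: u); first by rewrite /= su.
  by move: (right_special_drop hF 1 RSz); rewrite Ez subst_cons_c.
case: (eqVneq a c) Ez => [->|/neq_negb ->] Ez.
  by exists (~~ c :: u); [rewrite /= su|move: RSz; rewrite Ez subst_cons_negc].
case: nc; case: RSz => /(lang_belast hF); rewrite Ez.
by rewrite -[_ :: _ :: _]/([:: ~~ c; ~~ c] ++ _) => /(lang_prefix hF).
Qed.

Lemma desubst_recurrent u : F' u -> exists x, return_word F' u x.
Proof.
move=> Fu; have [x [xn Fx [t Et]]] := lang_recurrent hF Fu.
have [y Exy] : exists y, x = tau y.
  have [r Er] := subst_cat_c c u [::]; rewrite Er in Et.
  case: x xn Fx Et => [//|a x] _ Fx [ea _]; rewrite ea in Fx *.
  exact/lang_subst_image/(lang_prefix hF Fx).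
subst x; exists y; split.
- by case: y {Fx Et} xn.
- by rewrite /desubst_lang subst_cat -catA.
have {}Et : tau (y ++ u) ++ [:: c] = tau u ++ c :: t by rewrite subst_cat -catA Et -catA.
have := congr1 (sturm_unsubst c) Et; rewrite !unsubst_subst.
by move/prefix_cat_leq; rewrite size_cat leq_addl; apply.
Qed.

Lemma desubst_sturmian : sturmian_lang F'.
Proof.
split; [exact: desubst_catP|exact: desubst_extr|exact: desubst_extl|
  exact: desubst_right_special_uniq|exact: desubst_right_special_exists|
  exact: desubst_recurrent].
Qed.

End Desubstitution.

(** * Return words generate *)

Section ReturnWordsGenerate.
Variable gT : finGroupType.
Local Open Scope group_scope.

Definition eval_word (f : bool -> gT) x : gT := \prod_(a <- x) f a.

Definition returns_generate F w := forall (f : bool -> gT) (H : {group gT}),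
  (forall x, return_word F w x -> eval_word f x \in H) -> forall a, f a \in H.

Lemma eval_word_cat f x y : eval_word f (x ++ y) = eval_word f x * eval_word f y.
Proof. exact: big_cat. Qed.

Lemma eval_word_cons f a x : eval_word f (a :: x) = f a * eval_word f x.
Proof. exact: big_cons. Qed.

Lemma eval_word1 f a : eval_word f [:: a] = f a.
Proof. exact: big_seq1. Qed.

Lemma return_word_rcons F w a x : sturmian_lang F ->
  return_word F (rcons w a) x -> return_word F w x.
Proof.
move=> hF [xn Fx [t Et]]; split => //.
  by move: Fx; rewrite -cats1 catA => /(lang_prefix hF).
have : (x ++ w) ++ [:: a] = w ++ a :: t by rewrite -catA cats1 Et cat_rcons.
by move/prefix_cat_leq; rewrite size_cat leq_addl; apply.
Qed.

Lemma return_word_cons F w a x : sturmian_lang F -> return_word F (a :: w) x ->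
  exists2 y, x = a :: y & return_word F w (rcons y a).
Proof.
move=> hF [xn Fx [t Et]]; case: x xn Fx Et => [//|b y] _ Fx [-> Et].
exists y => //; split; first by case: y {Fx Et}.
  by rewrite cat_rcons; apply: lang_behead Fx.
by exists t; rewrite cat_rcons.
Qed.

Lemma returns_generate_nil F : sturmian_lang F -> returns_generate F [::].
Proof.
move=> hF f H inH a; rewrite -(eval_word1 f); apply: inH.
by split=> //; [rewrite cats0; apply: lang_letter|exists [:: a]].
Qed.

Lemma returns_generate_rcons F w a : sturmian_lang F ->
  returns_generate F (rcons w a) -> returns_generate F w.
Proof.
move=> hF genw f H inH; apply: genw => x /(return_word_rcons hF); exact: inH.
Qed.

Lemma returns_generate_cons F w a : sturmian_lang F ->
  returns_generate F (a :: w) -> returns_generate F w.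
Proof.
move=> hF genw f H inH.
(* Conjugation by [f a] turns the return word [a :: y] of [a :: w] into the
   return word [rcons y a] of [w]. *)
have inHg b : f b \in (H :^ (f a)^-1)%G.
  apply: genw => _ /(return_word_cons hF) [y -> /inH].
  by rewrite mem_conjgV eval_word_cons conjgE -mulgA mulKg -cats1 eval_word_cat eval_word1.
have faH : f a \in H by have := inHg a; rewrite mem_conjgV conjgE mulKg.
by move=> b; have := inHg b; rewrite mem_conjgV groupJr.
Qed.

Lemma returns_generate_subst F c w :
  returns_generate (desubst_lang c F) w -> returns_generate F (sturm_subst c w ++ [:: c]).
Proof.
move=> genw f H inH.
pose f' b := eval_word f (sturm_subst c [:: b]).
have evalE x : eval_word f' x = eval_word f (sturm_subst c x).
  elim: x => [|b x IHx]; first by rewrite /eval_word !big_nil.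
  by rewrite eval_word_cons IHx -eval_word_cat -subst_cat.
have inH' b : f' b \in H.
  apply: genw => x [xn Fx [t Et]]; rewrite evalE; apply: inH; split.
  - by case: x xn {Fx Et} => //= b' x _; case: (b' == c).
  - by move: Fx; rewrite /desubst_lang subst_cat -catA.
  have [t' Et'] := subst_cat_c c t [::].
  by exists t'; rewrite catA -subst_cat Et subst_cat -catA Et' -catA.
have := inH' c; have := inH' (~~ c); rewrite /f' subst_c subst_negc eval_word1.
rewrite eval_word_cons eval_word1 => fcnc fc.
by move=> b; case: (eqVneq b c) => [-> //|/neq_negb ->]; rewrite -(groupMl _ fc).
Qed.

Lemma returns_generate_c F c : sturmian_lang F -> ~ F [:: ~~ c; ~~ c] ->
  returns_generate F [:: c].
Proof.
move=> hF nc f H inH.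
have [Fcc Fcnc] := (right_specialE F c _).1 (right_special_isolated hF nc).
have fc : f c \in H.
  by rewrite -eval_word1; apply: inH; split => //; exists [:: c].
have fcnc : f c * f (~~ c) \in H.
  have -> : f c * f (~~ c) = eval_word f [:: c; ~~ c] by rewrite eval_word_cons eval_word1.
  apply: inH; split => //.
    exact: (isolated_followed hF nc Fcnc).
  by exists [:: ~~ c; c].
by move=> b; case: (eqVneq b c) => [-> //|/neq_negb ->]; rewrite -(groupMl _ fc).
Qed.

End ReturnWordsGenerate.

Lemma isolated_run F c : sturmian_lang F -> F [:: ~~ c] ->
  exists k, F (~~ c :: rcons (nseq k c) (~~ c)).
Proof.
move=> hF Fn; have [x [xn Fx [t Et]]] := lang_recurrent hF Fn.
suff run y j : F (~~ c :: nseq j c ++ y ++ [:: ~~ c]) ->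
    exists k, F (~~ c :: rcons (nseq k c) (~~ c)).
  by case: x xn Fx Et => [//|a y] _ Fx [ea _]; rewrite ea in Fx; apply: (run y 0).
elim: y j => [|b y IHy] j Fy; first by exists j; rewrite -cats1.
case: (eqVneq b c) Fy => [->|/neq_negb ->] Fy.
  apply: (IHy j.+1).
  suff -> : nseq j.+1 c = rcons (nseq j c) c by rewrite cat_rcons.
  by elim: j {IHy Fy} => //= j ->.
exists j; apply: (lang_prefix hF (v := y ++ [:: ~~ c])).
by rewrite cat_cons -cats1 -catA.
Qed.

Definition pad_head c w := if head c w == ~~ c then c :: w else w.

Definition pad_last c w := if last c w == ~~ c then rcons w c else w.

Lemma size_pad_head c w : size (pad_head c w) = size w + (head c w == ~~ c).
Proof. by rewrite /pad_head; case: ifP => _ /=; lia. Qed.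

Lemma size_pad_last c w : size (pad_last c w) = size w + (last c w == ~~ c).
Proof. by rewrite /pad_last; case: ifP => _; rewrite ?size_rcons; lia. Qed.

Lemma count_pad_head c w : count_mem (~~ c) (pad_head c w) = count_mem (~~ c) w.
Proof. by rewrite /pad_head; case: ifP => //= _; rewrite eqbN. Qed.

Lemma count_pad_last c w : count_mem (~~ c) (pad_last c w) = count_mem (~~ c) w.
Proof. by rewrite /pad_last; case: ifP => // _; rewrite -cats1 count_cat addnC; case: c. Qed.

Lemma last_pad_head c w : last c (pad_head c w) = last c w.
Proof. by rewrite /pad_head; case: ifP. Qed.

Lemma head_pad_head c w : head c (pad_head c w) = c.
Proof. by rewrite /pad_head; case: ifP => // /negbT/neq_negb; rewrite negbK. Qed.

Lemma head_pad_last c w : head c (pad_last c w) = head c w.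
Proof. by rewrite /pad_last; case: ifP => //; case: w. Qed.

Lemma last_pad_last c w : last c (pad_last c w) = c.
Proof. by rewrite /pad_last; case: ifP => [_|/negbT/neq_negb]; rewrite ?last_rcons ?negbK. Qed.

Lemma count_head_last_le c w : w != [::] -> w != [:: ~~ c] ->
  (head c w == ~~ c) + (last c w == ~~ c) <= count_mem (~~ c) w.
Proof.
case: w => [//|a [|b w]] _; first by case: a c => [] [].
move=> _; change ((a == ~~ c) + (last b w == ~~ c) <= (a == ~~ c) + count_mem (~~ c) (b :: w)).
rewrite leq_add2l; case: eqP => [lastn|//].
by rewrite -has_count has_pred1 -lastn mem_last.
Qed.

Section Padding.
Variable F : seq bool -> Prop.
Hypothesis hF : sturmian_lang F.
Variable c : bool.
Hypothesis nc : ~ F [:: ~~ c; ~~ c].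

Lemma lang_pad_head w : F w -> F (pad_head c w).
Proof.
rewrite /pad_head; case: eqP => // hw; case: w hw => [|a w] /= hw Fw.
  by move/eqP: hw; rewrite eqbN.
by rewrite hw; apply: (isolated_preceded hF nc); rewrite -hw.
Qed.

Lemma lang_pad_last w : F w -> F (pad_last c w).
Proof.
rewrite /pad_last; case: eqP => // lw; case/lastP: w lw => [|w a] lw Fw.
  by move/eqP: lw; rewrite eqbN.
by move: Fw; rewrite last_rcons in lw; rewrite lw; apply: isolated_followed.
Qed.

Lemma lang_subst_padded v : F v -> head c v = c -> last c v = c -> v != [::] ->
  exists u, v = sturm_subst c u ++ [:: c].
Proof.
case/lastP: v => [//|p a] Fv hv; rewrite last_rcons => -> _.
case: p Fv hv => [|b p] Fv /= hb; first by exists [::].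
move: Fv; rewrite hb => /(lang_belast hF) /(lang_subst_image hF nc) [u Eu].
by exists u; rewrite -Eu cats1.
Qed.

Lemma pad_desubst w : F w -> w != [::] -> w != [:: ~~ c] -> exists u,
  [/\ pad_last c (pad_head c w) = sturm_subst c u ++ [:: c], desubst_lang c F u & size u < size w].
Proof.
move=> Fw wn wn'; set v := pad_last c (pad_head c w).
have Fv : F v by apply/lang_pad_last/lang_pad_head.
have sv : size v = size w + (head c w == ~~ c) + (last c w == ~~ c).
  by rewrite size_pad_last size_pad_head last_pad_head.
have cv : count_mem (~~ c) v = count_mem (~~ c) w by rewrite count_pad_last count_pad_head.
have hv : head c v = c by rewrite head_pad_last head_pad_head.
have vn : v != [::] by rewrite -size_eq0 sv; case: (w) wn.
have [u Eu] := lang_subst_padded Fv hv (last_pad_last _ _) vn.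
exists u; split => //; first by rewrite /desubst_lang -Eu.
have := count_head_last_le wn wn'.
by move: sv cv; rewrite Eu size_cat size_subst count_cat count_subst /= eqbN; lia.
Qed.

End Padding.

Section Generation.
Variable gT : finGroupType.

Lemma subst_isolated_run c k :
  sturm_subst c (~~ c :: rcons (nseq k c) (~~ c)) ++ [:: c] =
  rcons (rcons (c :: ~~ c :: nseq k.+1 c) (~~ c)) c.
Proof.
rewrite subst_cons_negc -cats1 subst_cat subst_nseq subst_negc -!cats1 /=.
by rewrite -!catA; congr [:: _, _ & _]; elim: k => //= k ->.
Qed.

(* Desubstitution shortens the runs of [c] between two occurrences of [~~ c] by one. *)
Lemma returns_generate_isolated k F c : sturmian_lang F -> ~ F [:: ~~ c; ~~ c] ->
  F (~~ c :: rcons (nseq k c) (~~ c)) -> returns_generate gT F [:: ~~ c].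
Proof.
elim: k F c => [|k IHk] F c hF nc Frun; first by case: nc.
have hF' := desubst_sturmian hF nc.
have gen' : returns_generate gT (desubst_lang c F) [:: ~~ c].
  have [e ne] := sturmian_lang_isolated hF'.
  case: (eqVneq e c) ne => [-> ne|/neq_negb -> ne]; last exact: returns_generate_c.
  apply: (IHk _ _ hF' ne); rewrite /desubst_lang subst_isolated_run.
  exact/(isolated_followed hF nc)/(isolated_preceded hF nc).
have := returns_generate_subst gen'; rewrite subst_negc => gen.
exact/(returns_generate_cons (a := c) hF)/(returns_generate_rcons (a := c) hF).
Qed.

Lemma returns_generate_pad F c w : sturmian_lang F ->
  returns_generate gT F (pad_last c (pad_head c w)) -> returns_generate gT F w.
Proof.
move=> hF gen; have {}gen : returns_generate gT F (pad_head c w).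
  by move: gen; rewrite /pad_last; case: ifP => // _; apply: returns_generate_rcons.
by move: gen; rewrite /pad_head; case: ifP => // _; apply: returns_generate_cons.
Qed.

(* Padding [w] with [c] where it shows [~~ c] yields the image of a shorter word,
   except for [w = [:: ~~ c]], which is handled by induction on the runs of [c]. *)
Lemma returns_generate_all F w : sturmian_lang F -> F w -> returns_generate gT F w.
Proof.
elim: {w} (size w) {-2}w (leqnn (size w)) F => [|n IHn] w le_wn F hF Fw.
  by move: le_wn; rewrite leqn0 => /nilP ->; apply: returns_generate_nil.
have [-> |wn] := eqVneq w [::]; first exact: returns_generate_nil.
have [c nc] := sturmian_lang_isolated hF.
have [ew|wn'] := eqVneq w [:: ~~ c].
  rewrite ew in Fw *; have [k Frun] := isolated_run hF Fw.
  exact: returns_generate_isolated Frun.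
have [u [Eu Fu lt_uw]] := pad_desubst hF nc Fw wn wn'.
apply: (returns_generate_pad (c := c) hF); rewrite Eu.
by apply/returns_generate_subst/(IHn _ _ _ (desubst_sturmian hF nc) Fu); lia.
Qed.

End Generation.

(** * Factors of a Sturmian sequence *)

Fixpoint window (s : int -> bool) (k : int) (n : nat) : seq bool :=
  if n is n'.+1 then s k :: window s (k + 1)%R n' else [::].

Lemma antitone_pigeonhole (T : finType) (P : T -> nat -> Prop) :
  (forall t m m', (m <= m')%N -> P t m' -> P t m) ->
  (forall m, exists t, P t m) -> exists t, forall m, P t m.
Proof.
move=> P_anti P_ex; apply: contrapT => /forallNP P_fails.
have /choice [bad badP] t : exists m, ~ P t m by apply/existsNP/P_fails.
have [t Pt] := P_ex (\max_t bad t).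
by apply: (badP t); apply: P_anti Pt; apply: leq_bigmax.
Qed.

Section Windows.
Variable s : int -> bool.
Local Open Scope ring_scope.

Lemma size_window k n : size (window s k n) = n.
Proof. by elim: n k => //= n IHn k; rewrite IHn. Qed.

Lemma nth_window k n i : (i < n)%N -> nth false (window s k n) i = s (k + i%:Z).
Proof.
elim: n k i => [//|n IHn] k [|i] /= lt_in; first by rewrite addr0.
by rewrite IHn //; congr s; lia.
Qed.

Lemma windowD k m n : window s k (m + n) = window s k m ++ window s (k + m%:Z) n.
Proof.
elim: m k => [|m IHm] k /=; first by rewrite addr0.
by rewrite IHm; congr (_ :: _ ++ window _ _ _); lia.
Qed.

Lemma is_factor_window w : is_factor s w <-> exists k, window s k (size w) = w.
Proof.
split=> -[k Ew]; exists k.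
  apply: (@eq_from_nth _ false); rewrite size_window // => i lt_iw.
  by rewrite nth_window // Ew.
by move=> i lt_iw; rewrite -(nth_window k lt_iw) Ew.
Qed.

Lemma window_sub (x y : int) m r n : window s x m = window s y m -> (r + n <= m)%N ->
  window s (x + r%:Z) n = window s (y + r%:Z) n.
Proof.
move=> Exy le_m; move: Exy; rewrite -(subnKC le_m) -addnA !windowD.
move/eqP; rewrite eqseq_cat ?size_window // => /andP [_].
by rewrite eqseq_cat ?size_window // => /andP [/eqP].
Qed.

Lemma is_factor_catP u v : is_factor s (u ++ v) -> is_factor s u /\ is_factor s v.
Proof.
move/is_factor_window=> [k]; rewrite size_cat windowD => /eqP.
rewrite eqseq_cat ?size_window // => /andP [/eqP Eu /eqP Ev].
by split; apply/is_factor_window; [exists k|exists (k + (size u)%:Z)].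
Qed.

Lemma is_factor_extr u : is_factor s u -> exists a, is_factor s (rcons u a).
Proof.
move/is_factor_window=> [k Eu]; exists (s (k + (size u)%:Z)); apply/is_factor_window.
by exists k; rewrite size_rcons -addn1 windowD Eu cats1.
Qed.

Lemma is_factor_extl u : is_factor s u -> exists a, is_factor s (a :: u).
Proof.
move/is_factor_window=> [k Eu]; exists (s (k - 1)); apply/is_factor_window.
by exists (k - 1) => /=; rewrite subrK Eu.
Qed.

Lemma window_prefix (x y : int) m m' : window s x m' = window s y m' -> (m <= m')%N ->
  window s x m = window s y m.
Proof. by move=> Exy le_m; have := @window_sub x y m' 0 m Exy; rewrite !addr0 add0n; apply. Qed.

Lemma eventually_periodic_of_windows (x : int) p : (0 < p)%N ->
  (forall m, window s x m = window s (x + p%:Z) m) -> eventually_periodic s.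
Proof.
move=> p_gt0 Ex; exists p, x; split => //; left => n le_xn.
have -> : n = x + `|n - x|%N%:Z by lia.
rewrite -addrA [_ + p%:Z]addrC addrA.
by rewrite -!(@nth_window _ `|n - x|%N.+1) // Ex.
Qed.

End Windows.

Lemma is_factor_belast s u a : is_factor s (rcons u a) -> is_factor s u.
Proof. by rewrite -cats1 => /is_factor_catP []. Qed.

Section FactorCounting.
Variables (s : int -> bool) (n : nat) (ws ws' : seq (seq bool)).
Local Notation F := (is_factor s).
Hypothesis ws_spec : [/\ uniq ws, size ws = n.+1, all (fun w => size w == n) ws &
  forall w, size w = n -> F w <-> w \in ws].
Hypothesis ws'_spec : [/\ uniq ws', size ws' = n.+2, all (fun w => size w == n.+1) ws' &
  forall w, size w = n.+1 -> F w <-> w \in ws'].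

Let ext b u := rcons u b \in ws'.

Lemma size_factors_ext : size ws' = (count (ext false) ws + count (ext true) ws)%N.
Proof.
have [ws_uniq _ _ ws_F] := ws_spec; have [ws'_uniq _ ws'_all ws'_F] := ws'_spec.
have perm_ws' : perm_eq ws'
    ([seq rcons u false | u <- ws & ext false u] ++ [seq rcons u true | u <- ws & ext true u]).
  apply: uniq_perm => //.
    rewrite cat_uniq !(map_inj_uniq (@rcons_injl _ _)) !filter_uniq //= andbT.
    by apply/hasPn => _ /mapP [u _ ->]; apply/negP => /mapP [v _] /rcons_inj [].
  move=> w; apply/idP/idP => [w_in|]; last first.
    by rewrite mem_cat => /orP [] /mapP [u]; rewrite mem_filter => /andP [+ _] ->.
  have /eqP := allP ws'_all w w_in; case/lastP: w w_in => [//|u a] w_in.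
  rewrite size_rcons => -[su]; have u_in : u \in ws.
    by apply/ws_F => //; apply: (is_factor_belast (a := a)); apply/ws'_F; rewrite ?size_rcons ?su.
  rewrite mem_cat; apply/orP; case: a w_in => w_in; [right|left];
    by apply: map_f; rewrite mem_filter u_in andbT.
by rewrite (perm_size perm_ws') size_cat !size_map !size_filter.
Qed.

Lemma count_right_special : count (predI (ext false) (ext true)) ws = 1%N.
Proof.
have [_ ws_size ws_all ws_F] := ws_spec; have [_ ws'_size _ ws'_F] := ws'_spec.
have ext_all : count [predU ext false & ext true] ws = n.+1.
  rewrite -ws_size; apply/eqP; rewrite -all_count; apply/allP => u u_in.
  have su : size u = n by apply/eqP/(allP ws_all).
  have [a Fua] := is_factor_extr ((ws_F u su).2 u_in).
  have : ext a u by apply/ws'_F; rewrite ?size_rcons ?su.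
  by case: a {Fua} => ext_u; apply/orP; [right|left].
have := count_predUI (ext false) (ext true) ws.
by rewrite ext_all -size_factors_ext ws'_size; lia.
Qed.

Lemma right_special_ext u : size u = n -> right_special F u <-> ext false u && ext true u.
Proof.
have [_ _ _ ws'_F] := ws'_spec.
move=> su; have extE b : F (rcons u b) <-> ext b u by apply: ws'_F; rewrite size_rcons su.
split=> [[/extE ext0 /extE ext1]|/andP [/extE F0 /extE F1]] //.
by apply/andP.
Qed.

End FactorCounting.

Section SturmianSequence.
Variable s : int -> bool.
Hypothesis hst : sturmian s.
Local Notation F := (is_factor s).
Local Open Scope ring_scope.

Lemma factor_right_special_uniq u v :
  right_special F u -> right_special F v -> size u = size v -> u = v.
Proof.
move=> RSu RSv suv; apply/eqP; apply: contraT => neq_uv.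
have [ws ws_spec] := hst.2 (size u); have [ws' ws'_spec] := hst.2 (size u).+1.
have [_ _ _ ws_F] := ws_spec; have RSE := right_special_ext ws'_spec.
have u_in : u \in ws by apply/ws_F => //; case: RSu => /is_factor_belast.
have v_in : v \in ws by apply/ws_F => //; case: RSv => /is_factor_belast.
have := count_right_special ws_spec ws'_spec.
rewrite -size_filter; set RS := filter _ ws => size_RS.
have : (size [:: u; v] <= size RS)%N.
  apply: uniq_leq_size; first by rewrite /= inE neq_uv.
  move=> w; rewrite !inE mem_filter => /orP [] /eqP -> /=.
    by rewrite u_in andbT -RSE.
  by rewrite v_in andbT -RSE -?suv.
by rewrite size_RS.
Qed.

Lemma factor_right_special_exists n : exists2 u, size u = n & right_special F u.
Proof.
have [ws ws_spec] := hst.2 n; have [ws' ws'_spec] := hst.2 n.+1.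
have := count_right_special ws_spec ws'_spec; set P := predI _ _ => count1.
have /hasP [u u_in RSu] : has P ws by rewrite has_count count1.
have [_ _ ws_all _] := ws_spec; have su : size u = n by apply/eqP/(allP ws_all).
by exists u => //; apply/(right_special_ext ws'_spec su).
Qed.

Lemma uniq_windows_size (L : seq (seq bool)) m :
  uniq L -> (forall w, w \in L -> exists k, w = window s k m) -> (size L <= m.+1)%N.
Proof.
move=> L_uniq L_win; have [ws [_ <- ws_all ws_F]] := hst.2 m.
apply: uniq_leq_size => // w /L_win [k ->]; apply/ws_F; rewrite ?size_window //.
by apply/is_factor_window; exists k; rewrite size_window.
Qed.

(* If the window at [k] never reappears to the right, the windows of length [m]
   at [k - r], [r <= m - n], are pairwise distinct and differ from those at
   [k + 1], ..., [k + n + 1]; since there are only [m + 1] factors of length [m],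
   two of the latter coincide. *)
Section NoReturn.
Variables (k : int) (n : nat).
Hypothesis no_return : forall t, (0 < t)%N -> window s (k + t%:Z) n != window s k n.

Lemma no_later_copy (x y : int) m r : window s x m = window s y m -> (r + n <= m)%N ->
  x + r%:Z = k -> y <= x.
Proof.
move=> Exy le_m xrk; apply: contraT => lt_xy.
have := @no_return `|y - x|%N (ltac:(lia)).
have -> : k + `|y - x|%N%:Z = y + r%:Z by lia.
by rewrite -xrk (window_sub Exy le_m) eqxx.
Qed.

Lemma windows_collide m : (n <= m)%N -> exists a b : nat,
  [/\ (a < b)%N, (b <= n)%N & window s (k + a.+1%:Z) m = window s (k + b.+1%:Z) m].
Proof.
move=> le_nm.
pose before := [seq window s (k - r%:Z) m | r <- iota 0 (m - n).+1].
pose after := [seq window s (k + i.+1%:Z) m | i <- iota 0 n.+1].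
have before_uniq : uniq before.
  rewrite map_inj_in_uniq ?iota_uniq // => r1 r2; rewrite !mem_iota !add0n => r1_le r2_le E.
  have := no_later_copy E (ltac:(lia) : (r1 + n <= m)%N) (subrK _ _).
  have := no_later_copy (esym E) (ltac:(lia) : (r2 + n <= m)%N) (subrK _ _).
  by move=> ? ?; apply/eqP; lia.
have disjoint : ~~ has (mem before) after.
  apply/hasPn => _ /mapP [i i_in ->]; apply/negP => /mapP [r r_in E].
  move: i_in r_in; rewrite !mem_iota !add0n => i_le r_le.
  by have := no_later_copy (esym E) (ltac:(lia) : (r + n <= m)%N) (subrK _ _); lia.
have : ~~ uniq after.
  apply/negP => after_uniq.
  suff : (size (before ++ after) <= m.+1)%N by rewrite size_cat !size_map !size_iota; lia.
  apply: uniq_windows_size; first by rewrite cat_uniq before_uniq disjoint after_uniq.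
  by move=> w; rewrite mem_cat => /orP [] /mapP [r _ ->]; eexists.
case/(uniqPn [::]) => a [b [lt_ab]]; rewrite size_map size_iota => lt_b.
have lt_a : (a < n.+1)%N by lia.
rewrite !(nth_map 0%N) ?size_iota ?nth_iota ?add0n // => E.
by exists a, b; split => //; lia.
Qed.
End NoReturn.

(* By pigeonhole one pair of positions has equal windows of every length, which
   makes [s] eventually periodic. *)
Lemma window_returns k n : exists2 t, (0 < t)%N & window s (k + t%:Z) n = window s k n.
Proof.
apply: contrapT => returns_never.
have no_ret t : (0 < t)%N -> window s (k + t%:Z) n != window s k n.
  by move=> t_gt0; apply/eqP => E; apply: returns_never; exists t.
pose P (ab : 'I_n.+1 * 'I_n.+1) m :=
  (ab.1 < ab.2)%N /\ window s (k + ab.1.+1%:Z) m = window s (k + ab.2.+1%:Z) m.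
have [[a b] Pab] : exists ab, forall m, P ab m.
  apply: antitone_pigeonhole => [ab m m' le_m [lt_ab E]|m].
    by split => //; apply: window_prefix E le_m.
  have [a [b [lt_ab le_bn E]]] := windows_collide no_ret (leq_maxr m n).
  exists (inord a, inord b); rewrite /P /= !inordK; try lia.
  by split => //; apply: window_prefix E (leq_maxl m n).
have [/= lt_ab _] := Pab 0%N.
apply: hst.1; apply: (@eventually_periodic_of_windows _ (k + a.+1%:Z) (b - a)%N); first lia.
by move=> m; have [_ ->] := Pab m; congr window => /=; lia.
Qed.

Lemma factor_recurrent u : F u -> exists x, return_word F u x.
Proof.
move/is_factor_window=> [k Eu]; have [t t_gt0 Et] := window_returns k (size u).
exists (window s k t); split.
- by rewrite -size_eq0 size_window -lt0n.
- by apply/is_factor_window; exists k; rewrite size_cat size_window windowD Et Eu.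
by exists (window s (k + (size u)%:Z) t); rewrite -{1}Eu -Et -windowD addnC windowD Eu.
Qed.

Lemma sturmian_factors : sturmian_lang F.
Proof.
split; [exact: is_factor_catP|exact: is_factor_extr|exact: is_factor_extl|
  exact: factor_right_special_uniq|exact: factor_right_special_exists|
  exact: factor_recurrent].
Qed.

End SturmianSequence.

(** * Visits of the walk *)

Lemma exists_minimizer (T : Type) (P : T -> Prop) (g : T -> nat) :
  (exists p, P p) -> exists2 p, P p & forall q, P q -> g p <= g q.
Proof.
case=> p Pp; have ex_n : exists n, `[< exists p, P p /\ g p = n >].
  by exists (g p); apply/asboolP; exists p.
case: (ex_minnP ex_n) => n /asboolP [p' [Pp' <-]] min_n.
by exists p' => // q Pq; apply: min_n; apply/asboolP; exists q.
Qed.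

Lemma gen2_subG_of_shifts (gT : finGroupType) (G : {group gT}) (h v : gT) M :
  (forall b : bool, h ^+ (M + b) * v \in G)%g -> (<<[set h; v]>> \subset G)%g.
Proof.
move=> inG; have hG : h \in G.
  have -> : h = (h ^+ (M + true) * v * (h ^+ (M + false) * v)^-1)%g.
    by rewrite /nat_of_bool addn1 addn0 expgS -(mulgA h) mulgK.
  by rewrite groupM ?groupV.
have vG : v \in G.
  have -> : v = ((h ^+ M)^-1 * (h ^+ (M + false) * v))%g by rewrite /nat_of_bool addn0 mulKg.
  by rewrite groupM ?groupV ?groupX.
by rewrite gen_subG; apply/subsetP => g /set2P [] ->.
Qed.

Lemma atrans_astabs_setT (T : finType) (G : {group {perm T}}) (S : {set T}) :
  [transitive G, on [set: T] | 'P] -> G \subset 'N(S | 'P)%g -> S != set0 -> S = [set: T].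
Proof.
move=> trans_G G_stab /set0Pn [t0 t0_in]; apply/setP => t; rewrite inE.
have [a aG ->] := atransP2 trans_G (in_setT t0) (in_setT t).
by rewrite (astabs_act _ (subsetP G_stab a aG)).
Qed.

Section Visits.
Variables (T : finType) (s : int -> bool) (f : bool -> {perm T}) (mu : int -> T).
Hypothesis mu_step : forall n, mu (n + 1)%R = f (s n) (mu n).

Lemma mu_window k n : mu (k + n%:Z)%R = eval_word f (window s k n) (mu k).
Proof.
elim: n k => [|n IHn] k; first by rewrite GRing.addr0 /eval_word big_nil perm1.
rewrite /= eval_word_cons permM -mu_step -IHn; congr mu; lia.
Qed.

Definition visits w : {set T} :=
  [set t | `[< exists k, window s k (size w) = w /\ mu k = t >]].

Lemma visitsP w t : reflect (exists k, window s k (size w) = w /\ mu k = t) (t \in visits w).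
Proof. by rewrite inE; apply: asboolP. Qed.

Lemma visits_catl u v : visits (u ++ v) \subset visits u.
Proof.
apply/subsetP => t /visitsP [k [Euv <-]]; apply/visitsP; exists k; split => //.
by move: Euv; rewrite size_cat windowD => /eqP; rewrite eqseq_cat ?size_window // => /andP [/eqP].
Qed.

Lemma visits_catr u v t : t \in visits (u ++ v) -> eval_word f u t \in visits v.
Proof.
move=> /visitsP [k [Euv <-]]; apply/visitsP; exists (k + (size u)%:Z)%R.
move: Euv; rewrite size_cat windowD => /eqP; rewrite eqseq_cat ?size_window //.
by case/andP => /eqP Eu /eqP Ev; rewrite mu_window Eu.
Qed.

Lemma visits_neq0 w : is_factor s w -> visits w != set0.
Proof.
by move/is_factor_window => [k Ew]; apply/set0Pn; exists (mu k); apply/visitsP; exists k.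
Qed.

Section MinimalVisits.
Hypothesis hst : sturmian s.
Variable w : seq bool.
Hypothesis Fw : is_factor s w.
Hypothesis w_min : forall w', is_factor s w' -> #|visits w| <= #|visits w'|.

Lemma visits_min_return x : return_word (is_factor s) w x -> eval_word f x \in 'N(visits w | 'P)%g.
Proof.
move=> [_ Fxw [r Er]]; set g := eval_word f x.
have visits_xw : visits (x ++ w) = visits w.
  by apply/eqP; rewrite eqEcard w_min // Er visits_catl.
have g_visits : g @: visits w = visits w.
  apply/eqP; rewrite eqEcard card_imset ?leqnn ?andbT; last exact: perm_inj.
  by apply/subsetP => _ /imsetP [t' t'_in ->]; rewrite -visits_xw in t'_in; apply: visits_catr.
by apply/astabsP => t; rewrite /= /aperm -[in LHS]g_visits mem_imset //; apply: perm_inj.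
Qed.

Lemma visits_min_stable a : f a \in 'N(visits w | 'P)%g.
Proof.
apply: (returns_generate_all (sturmian_factors hst) Fw) => x.
exact: visits_min_return.
Qed.

Lemma visits_min_full w' : visits w = [set: T] -> is_factor s w' -> visits w' = [set: T].
Proof. by move=> visits_w Fw'; apply/eqP; rewrite eqEcard subsetT -visits_w w_min. Qed.

End MinimalVisits.
End Visits.

Theorem lemma5p7 (d : nat) (h v : {perm 'I_d}) (M : nat)
  (htrans : [transitive <<[set h; v]>>, on [set: 'I_d] | 'P])
  (sigma : int -> bool) (hst : sturmian sigma)
  (mu : int -> 'I_d)
  (hmu : forall n : int, mu (n + 1)%R = sact h v M (sigma n) (mu n)) :
  forall (l : 'I_d) (s : bool), exists n : int, mu n = l /\ sigma n = s.
Proof.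
(* Permutations compose left to right, [(p * q) x = q (p x)]. *)
move=> l s; pose f (b : bool) : {perm 'I_d} := (h ^+ (M + b) * v)%g.
have mu_step n : mu (n + 1)%R = f (sigma n) (mu n).
  by rewrite hmu /sact /f permM; case: (sigma n); rewrite ?addn1 ?addn0.
have Fs := lang_letter (sturmian_factors hst) s.
have [w Fw w_min] := exists_minimizer (fun w => #|visits sigma mu w|) (ex_intro _ _ Fs).
have genN := gen2_subG_of_shifts (visits_min_stable mu_step hst Fw w_min).
have visits_w := atrans_astabs_setT htrans genN (visits_neq0 mu Fw).
have : l \in visits sigma mu [:: s] by rewrite (visits_min_full w_min visits_w Fs) inE.
by case/visitsP => k [[Es] <-]; exists k.
Qed.
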